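(* For every backward trie $\mathsf{T}_b$ with $n$ nodes, over any alphabet, $\mathsf{DAWG}(\mathsf{T}_b)$ has $O(n^2)$ nodes and $O(n^2)$ edges. Moreover, there exist backward tries $\mathsf{T}_b$ with $n$ nodes, for arbitrarily large $n$ and over an alphabet of constant size, such that $\mathsf{DAWG}(\mathsf{T}_b)$ has $\Omega(n^2)$ nodes and $\Omega(n^2)$ edges.
   Context: An alphabet $\Sigma$ is a finite ordered set of characters. A forward trie $\mathsf{T}_f$ is a rooted tree with $n$ nodes in which every edge is directed from parent to child and labeled by a single character of $\Sigma$, such that the edges leaving any node carry pairwise distinct labels. The backward trie $\mathsf{T}_b$ is obtained from $\mathsf{T}_f$ by reversing the direction of every edge while keeping its label; it has the same nodes and root $r$. For nodes $u,v$ with $u$ an ancestor of $v$ (possibly $u=v$), $\mathrm{str}_b(v,u)$ is the string of labels read along the reversed (upward) path from $v$ to $u$. Define $\mathrm{Substr}(\mathsf{T}_b)=\{\mathrm{str}_b(v,u): u \text{ an ancestor of } v\}$. A string $Y\in\mathrm{Substr}(\mathsf{T}_b)$ is left-maximal on $\mathsf{T}_b$ if either there are distinct characters $a\ne b$ with $aY,bY\in\mathrm{Substr}(\mathsf{T}_b)$, or $Y=\mathrm{str}_b(\ell,u)$ for some leaf $\ell$ and some ancestor $u$ of $\ell$. For $Y\in\mathrm{Substr}(\mathsf{T}_b)$ let $\mathrm{lmx}_b(Y)$ be the shortest left-maximal string on $\mathsf{T}_b$ of the form $\gamma Y$ with $\gamma\in\Sigma^*$. Two substrings $Y,Y'$ are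 equivalent iff $\mathrm{lmx}_b(Y)=\mathrm{lmx}_b(Y')$; let $[Y]$ denote the class of $Y$. $\mathsf{DAWG}(\mathsf{T}_b)$ is the deterministic edge-labeled directed graph whose nodes are the classes $[Y]$, $Y\in\mathrm{Substr}(\mathsf{T}_b)$, with an edge labeled $a\in\Sigma$ from $[Y]$ to $[Ya]$ whenever $Y,Ya\in\mathrm{Substr}(\mathsf{T}_b)$. *)

From mathcomp Require Import all_boot.
Set Implicit Arguments. Unset Strict Implicit. Unset Printing Implicit Defensive.

(* A trie with node type T (n = #|T| nodes), alphabet S, root r.
   par v is the parent of v (par r = r by convention); the forward edge
   par v -> v (for v <> r) is labeled lab v; lab r is irrelevant. *)
Section Trie.
Variables (S T : finType) (r : T) (par : T -> T) (lab : T -> S).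

Definition is_trie : Prop :=
  [/\ par r = r,
      (forall v, exists k, iter k par v = r) &
      (forall u v, u != r -> v != r -> par u = par v -> lab u = lab v -> u = v)].

Definition up_ok (v : T) (k : nat) : Prop := forall i, i < k -> iter i par v != r.

(* str_b(v, iter k par v): labels read along the reversed path from v upward *)
Definition str_b (v : T) (k : nat) : seq S := [seq lab (iter i par v) | i <- iota 0 k].

Definition in_substr (Y : seq S) : Prop :=
  exists v k, up_ok v k /\ Y = str_b v k.

Definition is_leaf (l : T) : Prop := forall c, c != r -> par c != l.

Definition left_maximal (Y : seq S) : Prop :=
  in_substr Y /\
  ((exists a b : S, a != b /\ in_substr (a :: Y) /\ in_substr (b :: Y)) \/
   (exists l k, is_leaf l /\ up_ok l k /\ Y = str_b l k)).

Definition is_lmx (Y Z : seq S) : Prop :=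
  [/\ left_maximal Z, (exists g, Z = g ++ Y) &
      (forall Z', left_maximal Z' -> (exists g, Z' = g ++ Y) -> size Z <= size Z')].

Definition equiv_b (Y Y' : seq S) : Prop :=
  in_substr Y /\ in_substr Y' /\ exists Z, is_lmx Y Z /\ is_lmx Y' Z.

(* edge candidates of DAWG(T_b): ([Y], a, [Ya]) with Y, Ya substrings *)
Definition edge_ok (e : seq S * S) : Prop := in_substr e.1 /\ in_substr (rcons e.1 e.2).

Definition same_edge (e e' : seq S * S) : Prop :=
  equiv_b e.1 e'.1 /\ e.2 = e'.2 /\ equiv_b (rcons e.1 e.2) (rcons e'.1 e'.2).

End Trie.

Fixpoint pw_distinct (A : eqType) (R : A -> A -> Prop) (s : seq A) : Prop :=
  if s is x :: s' then (forall y, y \in s' -> ~ R x y) /\ pw_distinct R s' else True.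

(* s lists substrings from pairwise distinct classes = distinct DAWG nodes *)
Definition dawg_node_list (S T : finType) (r : T) (par : T -> T) (lab : T -> S)
    (s : seq (seq S)) : Prop :=
  (forall Y, Y \in s -> in_substr r par lab Y) /\ pw_distinct (equiv_b r par lab) s.

(* s lists pairwise distinct DAWG edges ([Y], a, [Ya]) *)
Definition dawg_edge_list (S T : finType) (r : T) (par : T -> T) (lab : T -> S)
    (s : seq (seq S * S)) : Prop :=
  (forall e, e \in s -> edge_ok r par lab e) /\ pw_distinct (same_edge r par lab) s.

From mathcomp Require Import all_boot zify.
From Stdlib Require Import Classical ClassicalEpsilon.
Set Implicit Arguments. Unset Strict Implicit. Unset Printing Implicit Defensive.

(* A substring of T_b is read upward from a node, so it is
   [str_b v k] for a node v and a length k <= n (the upward path from v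
   visits k distinct nodes before the root).  If Y is not left-maximal it
   has a unique left extension bY, and the left-maximal strings ending with
   Y and with bY coincide; hence lmx(Y) = lmx(bY), lmx(Y) exists, and
   moreover Ya occurs iff lmx(Y)a occurs, with lmx(Ya) = lmx(lmx(Y)a).  So
   a node [Y] is determined by the occurrence (v, k) of lmx(Y), and an edge
   ([Y], a, [Ya]) by the occurrence of lmx(Y)a: at most n(n+1) <= 2n^2 each.

   On the comb with 3m+1 nodes (a spine A^m B^m below the root
   and a C-leaf hanging from every B-node) the strings C B^j A^i
   (1 <= j <= m, i <= m) are read upward from leaves, hence left-maximal and
   pairwise inequivalent: m^2 nodes, and m^2 edges labelled A between them. *)

Lemma uniq_pw_distinct (A : eqType) (R : A -> A -> Prop) (s : seq A) :
  uniq s -> {in s &, forall x y, R x y -> x = y} -> pw_distinct R s.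
Proof.
elim: s => [//|x s IH] /= /andP [x_new s_uniq] R_eq; split.
  move=> y y_s /R_eq; rewrite mem_head inE y_s orbT => /(_ isT isT) eq_xy.
  by move: x_new; rewrite eq_xy y_s.
by apply: IH => // y z y_s z_s; apply: R_eq; rewrite inE ?y_s ?z_s orbT.
Qed.

Lemma pw_distinct_uniq_map (A B : eqType) (R : A -> A -> Prop) (g : A -> B) (s : seq A) :
  {in s &, forall x y, g x = g y -> R x y} -> pw_distinct R s -> uniq (map g s).
Proof.
elim: s => [//|x s IH] /= g_R [x_new pw]; apply/andP; split.
  apply/mapP => -[y y_s eq_g]; apply: (x_new y y_s).
  by apply: g_R; rewrite ?inE ?eqxx ?y_s ?orbT.
by apply: IH => // y z y_s z_s; apply: g_R; rewrite inE ?y_s ?z_s orbT.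
Qed.

Lemma size_pw_distinct_codes (A : eqType) (U : finType) (R : A -> A -> Prop)
    (code : A -> U -> Prop) (s : seq A) :
  (forall x, x \in s -> exists u, code x u) ->
  (forall x y u, x \in s -> y \in s -> code x u -> code y u -> R x y) ->
  pw_distinct R s -> size s <= #|U|.
Proof.
case: s => [//|x0 s0] has_code code_R pw; set s := x0 :: s0 in has_code code_R pw *.
have [u0 _] := has_code x0 (mem_head x0 s0).
pose g x := epsilon (inhabits u0) (code x).
have gP x : x \in s -> code x (g x) by move/has_code/(epsilon_spec (inhabits u0)).
rewrite -(size_map g); have /card_uniqP <- : uniq (map g s); last exact: max_card.
apply: pw_distinct_uniq_map pw => x y xs ys eq_g.
by apply: (code_R x y (g x)) => //; [apply: gP | rewrite eq_g; apply: gP].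
Qed.

Section Substrings.
Variables (S T : finType) (r : T) (par : T -> T) (lab : T -> S).

Local Notation str := (str_b par lab).
Local Notation sub := (in_substr r par lab).
Local Notation up_ok := (up_ok r par).
Local Notation LM := (left_maximal r par lab).
Local Notation lmx := (is_lmx r par lab).

Lemma size_str v k : size (str v k) = k.
Proof. by rewrite size_map size_iota. Qed.

Lemma str_cat v i j : str v (i + j) = str v i ++ str (iter i par v) j.
Proof.
rewrite /str_b iotaD map_cat add0n -[in iota i j](addn0 i) iotaDl -map_comp.
by congr (_ ++ _); apply: eq_map => t /=; rewrite addnC iterD.
Qed.

Lemma up_ok_cat v i j : up_ok v (i + j) -> up_ok v i /\ up_ok (iter i par v) j.
Proof.
move=> ok; split=> t lt_t; first by apply: ok; apply: leq_trans lt_t (leq_addr _ _).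
by rewrite -iterD; apply: ok; rewrite addnC ltn_add2l.
Qed.

Lemma occ_cat v Y W : up_ok v (size Y + size W) -> str v (size Y + size W) = Y ++ W ->
  [/\ up_ok v (size Y), str v (size Y) = Y,
      up_ok (iter (size Y) par v) (size W) & str (iter (size Y) par v) (size W) = W].
Proof.
move=> /up_ok_cat [okY okW]; rewrite str_cat => /eqP.
by rewrite eqseq_cat ?size_str // => /andP [/eqP eqY /eqP eqW].
Qed.

Lemma substrP Y : sub Y -> exists2 v, up_ok v (size Y) & str v (size Y) = Y.
Proof. by case=> v [k [ok ->]]; exists v; rewrite size_str. Qed.

Lemma sub_suffix g Y : sub (g ++ Y) -> sub Y.
Proof.
case/substrP=> v; rewrite size_cat => ok /(occ_cat ok) [_ _ okY eqY].
by exists (iter (size g) par v), (size Y).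
Qed.

Lemma sub_prefix Y a : sub (rcons Y a) -> sub Y.
Proof.
case/substrP=> v; rewrite -cats1 size_cat => ok /(occ_cat ok) [okY eqY _ _].
by exists v, (size Y).
Qed.

Lemma str_child c v k : c != r -> par c = v -> up_ok v k ->
  up_ok c k.+1 /\ str c k.+1 = lab c :: str v k.
Proof.
move=> c_nr par_c ok; split; last by rewrite -add1n str_cat /= par_c.
by case=> [|t] //; rewrite ltnS iterSr par_c; apply: ok.
Qed.

Lemma up_ok_depth v k : is_trie r par lab -> up_ok v k -> k <= #|T|.
Proof.
case=> _ reach _ ok.
have reach_b : exists m, iter m par v == r by have [m ?] := reach v; exists m; apply/eqP.
have [m /eqP root_m min_m] := ex_minnP reach_b.
have le_km : k <= m by rewrite leqNgt; apply/negP => /ok; rewrite root_m eqxx.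
have iter_neq i j : i < j -> j < k -> iter i par v != iter j par v.
  move=> lt_ij lt_jk; apply/eqP => eq_ij.
  have le_jm : j <= m by apply: leq_trans (ltnW lt_jk) le_km.
  have : m <= m - j + i by apply: min_m; rewrite iterD eq_ij -iterD subnK ?root_m.
  lia.
have inj : injective (fun i : 'I_k => iter i par v).
  move=> i j /= eq_ij; apply: val_inj; case: (ltngtP i j) => // lt.
  - by move: (iter_neq _ _ lt (ltn_ord j)); rewrite eq_ij eqxx.
  - by move: (iter_neq _ _ lt (ltn_ord i)); rewrite eq_ij eqxx.
by have := leq_card _ inj; rewrite card_ord.
Qed.

Lemma sub_size Y : is_trie r par lab -> sub Y -> size Y <= #|T|.
Proof. by move=> trie /substrP [v ok _]; apply: up_ok_depth ok. Qed.

Lemma substr_code W : is_trie r par lab -> sub W ->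
  exists u : T * 'I_#|T|.+1, W = str u.1 u.2.
Proof.
move=> trie /substrP [v ok eqW].
have lt_W : size W < #|T|.+1 by rewrite ltnS (up_ok_depth trie ok).
by exists (v, Ordinal lt_W); rewrite eqW.
Qed.

Lemma not_LM_child Y v : ~ LM Y -> up_ok v (size Y) -> str v (size Y) = Y ->
  exists2 c, c != r & par c = v.
Proof.
move=> notLM ok eqY; apply: NNPP => no_child; apply: notLM; split.
  by exists v, (size Y).
right; exists v, (size Y); split => // c c_nr; apply/eqP => par_c.
by apply: no_child; exists c.
Qed.

Lemma left_ext_unique Y x y : ~ LM Y -> sub (x :: Y) -> sub (y :: Y) -> x = y.
Proof.
move=> notLM subx suby; case: (eqVneq x y) => // neq; case: notLM; split.
  exact: (@sub_suffix [:: x]).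
by left; exists x, y.
Qed.

Lemma left_ext_exists Y : sub Y -> ~ LM Y -> exists b, sub (b :: Y).
Proof.
case/substrP=> v ok eqY notLM; have [c c_nr par_c] := not_LM_child notLM ok eqY.
have [okc strc] := str_child c_nr par_c ok.
by exists (lab c), c, (size Y).+1; rewrite strc eqY.
Qed.

Lemma LM_lmx Y Z : LM Y -> lmx Y Z -> Z = Y.
Proof.
move=> LMY [_ [g eqZ] min_Z]; have := min_Z Y LMY (ex_intro _ [::] erefl).
by rewrite eqZ size_cat -[X in _ <= X]add0n leq_add2r leqn0 size_eq0 => /eqP->.
Qed.

Lemma LM_lmx_self Y : LM Y -> lmx Y Y.
Proof.
move=> LMY; split => //; first by exists [::].
by move=> Z _ [g ->]; rewrite size_cat leq_addl.
Qed.

(* If W is not left-maximal and bW occurs, then the left-maximal strings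
   ending with W are exactly those ending with bW, so lmx(W) = lmx(bW). *)
Lemma lmx_left_ext W b : ~ LM W -> sub (b :: W) ->
  forall Z, lmx W Z <-> lmx (b :: W) Z.
Proof.
move=> notLM subbW.
have ext Z : LM Z -> (exists g, Z = g ++ W) <-> (exists g, Z = g ++ b :: W).
  move=> LMZ; split; last by case=> g ->; exists (rcons g b); rewrite cat_rcons.
  case=> g; case/lastP: g => [|g x] eqZ; first by case: notLM; rewrite eqZ in LMZ.
  rewrite -cats1 -catA /= in eqZ.
  have subx : sub (x :: W) by apply: (@sub_suffix g); rewrite -eqZ; case: LMZ.
  by exists g; rewrite eqZ (left_ext_unique notLM subx subbW).
move=> Z; split=> [[LMZ /(ext _ LMZ) extZ minZ]|[LMZ /(ext _ LMZ) extZ minZ]].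
  by split => // Z' LMZ' /(ext _ LMZ'); apply: minZ.
by split => // Z' LMZ' /(ext _ LMZ'); apply: minZ.
Qed.

Lemma left_ext_rcons Y b a : ~ LM Y -> sub (b :: Y) -> sub (rcons Y a) ->
  sub (b :: rcons Y a) /\ ~ LM (rcons Y a).
Proof.
move=> notLM subbY /substrP [v ok eqYa]; rewrite -cats1 size_cat in ok eqYa.
have [okY eqY _ _] := occ_cat ok eqYa.
have ext_b x : sub (x :: rcons Y a) -> x = b.
  by move=> subx; apply: (left_ext_unique notLM) => //; apply: (@sub_prefix _ a).
split.
  have [c c_nr par_c] := not_LM_child notLM okY eqY.
  have [okc strc] := str_child c_nr par_c ok.
  have subc : sub (lab c :: rcons Y a).
    by exists c, (size Y + 1).+1; split => //; rewrite strc eqYa cats1.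
  by rewrite -(ext_b _ subc).
move=> [subYa [[x [y [neq [subx suby]]]] | [l [k [leaf_l [okl eql]]]]]].
  by move: neq; rewrite (ext_b _ subx) (ext_b _ suby) eqxx.
apply: notLM; split; first exact: sub_prefix subYa.
have eq_k : k = size Y + size [:: a] by rewrite -(size_str l k) -eql -cats1 size_cat.
rewrite eq_k -cats1 in okl eql; have [okY' eqY' _ _] := occ_cat okl (esym eql).
by right; exists l, (size Y).
Qed.

Lemma lmx_exists Y : is_trie r par lab -> sub Y -> exists Z, lmx Y Z.
Proof.
move=> trie; have [d] := ubnP (#|T| - size Y); elim: d Y => // d IH Y lt_d subY.
case: (classic (LM Y)) => [LMY|notLM]; first by exists Y; apply: LM_lmx_self.
have [b subbY] := left_ext_exists subY notLM.
have [|Z lmxZ] := IH (b :: Y) _ subbY.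
  by move: (sub_size trie subbY) lt_d => /=; set n := #|T|; lia.
by exists Z; apply/(lmx_left_ext notLM subbY).
Qed.

Lemma lmx_rcons Y Z a : lmx Y Z -> sub (rcons Y a) ->
  sub (rcons Z a) /\ (forall Z', lmx (rcons Y a) Z' <-> lmx (rcons Z a) Z').
Proof.
have [d] := ubnP (size Z - size Y); elim: d Y => // d IH Y lt_d lmxZ subYa.
case: (classic (LM Y)) => [LMY|notLM]; first by rewrite (LM_lmx LMY lmxZ).
have [b subbY] := left_ext_exists (sub_prefix subYa) notLM.
have lmxbZ : lmx (b :: Y) Z by apply/(lmx_left_ext notLM subbY).
have [subbYa notLMYa] := left_ext_rcons notLM subbY subYa.
have [|subZa eqZa] := IH (b :: Y) _ lmxbZ subbYa.
  by move: lt_d; case: lmxbZ => _ [g ->] _; rewrite size_cat /=; lia.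
split => // Z'; rewrite -eqZa; exact: (lmx_left_ext notLMYa subbYa).
Qed.

Lemma equiv_LM Y Y' : LM Y -> LM Y' -> equiv_b r par lab Y Y' -> Y = Y'.
Proof.
by move=> LMY LMY' [_ [_ [Z [lmxZ lmxZ']]]]; rewrite -(LM_lmx LMY lmxZ) (LM_lmx LMY' lmxZ').
Qed.

Lemma LM_node_list s : uniq s -> (forall Y, Y \in s -> LM Y) -> dawg_node_list r par lab s.
Proof.
move=> s_uniq s_LM; split; first by move=> Y /s_LM [].
by apply: uniq_pw_distinct => // Y Y' /s_LM LMY /s_LM LMY'; apply: equiv_LM.
Qed.

Lemma LM_edge_list s : uniq s -> (forall e, e \in s -> LM e.1 /\ LM (rcons e.1 e.2)) ->
  dawg_edge_list r par lab s.
Proof.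
move=> s_uniq s_LM; split; first by move=> e /s_LM [[sub1 _] [sub2 _]].
apply: uniq_pw_distinct => // -[Y a] [Y' a'] /s_LM [LMY _] /s_LM [LMY' _] [eqv [eq_a _]].
by move: (equiv_LM LMY LMY' eqv) eq_a => /= -> ->.
Qed.

End Substrings.

Section UpperBound.
Variables (S T : finType) (r : T) (par : T -> T) (lab : T -> S).
Hypothesis trie : is_trie r par lab.

Local Notation str := (str_b par lab).
Local Notation lmx := (is_lmx r par lab).

Lemma card_codes : #|{: T * 'I_#|T|.+1}| <= 2 * #|T| ^ 2.
Proof. by rewrite card_prod card_ord; set n := #|T|; nia. Qed.

(* A DAWG node [Y] is coded by an occurrence of lmx(Y). *)
Lemma dawg_nodes_upper s : dawg_node_list r par lab s -> size s <= 2 * #|T| ^ 2.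
Proof.
case=> subs pw; apply: leq_trans card_codes.
apply: (size_pw_distinct_codes
  (code := fun Y (u : T * 'I_#|T|.+1) => lmx Y (str u.1 u.2))) pw.
  move=> Y /subs subY; have [Z lmxZ] := lmx_exists trie subY.
  have [[subZ _] _ _] := lmxZ; have [u eqZ] := substr_code trie subZ.
  by exists u; rewrite -eqZ.
move=> Y Y' u /subs subY /subs subY' lmxY lmxY'.
by split => //; split => //; exists (str u.1 u.2).
Qed.

(* A DAWG edge ([Y], a, [Ya]) is coded by an occurrence of lmx(Y)a. *)
Lemma dawg_edges_upper s : dawg_edge_list r par lab s -> size s <= 2 * #|T| ^ 2.
Proof.
case=> oks pw; apply: leq_trans card_codes.
apply: (size_pw_distinct_codes (code := fun e (u : T * 'I_#|T|.+1) =>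
  exists2 Z, lmx e.1 Z & rcons Z e.2 = str u.1 u.2)) pw.
  move=> [Y a] /oks [subY subYa]; have [Z lmxZ] := lmx_exists trie subY.
  have [subZa _] := lmx_rcons lmxZ subYa; have [u eqZa] := substr_code trie subZa.
  by exists u, Z.
move=> [Y a] [Y' a'] u /oks [subY subYa] /oks [subY' subYa'] [Z lmxZ eqZ] [Z' lmxZ' eqZ'].
have [eqZZ' eqaa'] := rcons_inj (etrans eqZ (esym eqZ')); subst Z' a'.
have [Z2 lmxZ2] := lmx_exists trie subYa.
have [_ eqY] := lmx_rcons lmxZ subYa; have [_ eqY'] := lmx_rcons lmxZ' subYa'.
split; first by split => //; split => //; exists Z.
by split => //; split => //; split => //; exists Z2; split => //; apply/eqY'/eqY.
Qed.

End UpperBound.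

Lemma map_const_iota (A : eqType) (F : nat -> A) a n y :
  {in iota a n, forall t, F t = y} -> map F (iota a n) = nseq n y.
Proof.
move=> Fy; rewrite -[X in nseq X](size_iota a n) -(size_map F); apply/all_pred1P/allP.
by move=> _ /mapP [t /Fy -> ->] /=.
Qed.

Section Comb.
Variable m : nat.
Hypothesis m_gt0 : 0 < m.

Definition cA : 'I_3 := @Ordinal 3 0 isT.
Definition cB : 'I_3 := @Ordinal 3 1 isT.
Definition cC : 'I_3 := @Ordinal 3 2 isT.

(* Nodes 0..3m; 0 is the root, k <= 2m hangs below k - 1 (the spine, labelled
   A up to m and B above), and the leaf 2m + j hangs below m + j (label C). *)
Definition comb_parn (k : nat) : nat := if k <= 2 * m then k - 1 else k - m.

Definition comb_par (x : 'I_(3 * m).+1) : 'I_(3 * m).+1 := inord (comb_parn x).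

Definition comb_lab (x : 'I_(3 * m).+1) : 'I_3 :=
  if x <= m then cA else if x <= 2 * m then cB else cC.

Definition comb_root : 'I_(3 * m).+1 := ord0.

Lemma comb_parn_lt k : comb_parn k <= k - 1.
Proof. by rewrite /comb_parn; case: ifP; lia. Qed.

Lemma val_comb_par (x : 'I_(3 * m).+1) : nat_of_ord (comb_par x) = comb_parn x.
Proof.
rewrite /= inordK //.
exact: leq_ltn_trans (comb_parn_lt x) (leq_ltn_trans (leq_subr 1 x) (ltn_ord x)).
Qed.

Lemma val_comb_iter t (x : 'I_(3 * m).+1) : nat_of_ord (iter t comb_par x) = iter t comb_parn x.
Proof. by elim: t => [//|t IH]; rewrite !iterS val_comb_par IH. Qed.

Lemma iter_comb_parn t k : iter t comb_parn k <= k - t.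
Proof.
elim: t => [|t IH]; first by rewrite subn0.
by rewrite iterS (leq_trans (comb_parn_lt _)) //; lia.
Qed.

(* Parents are strictly lower, so every node reaches the root; distinct
   children of one node lie in distinct height bands, hence carry distinct labels. *)
Lemma comb_trie : is_trie comb_root comb_par comb_lab.
Proof.
split.
- by apply: ord_inj; rewrite /= inordK.
- move=> v; exists v; apply: ord_inj; rewrite val_comb_iter /=.
  by have := iter_comb_parn v v; rewrite subnn leqn0 => /eqP.
- move=> u v u_nr v_nr /(congr1 (@nat_of_ord _)); rewrite !val_comb_par /comb_parn /comb_lab.
  have pos (x : 'I_(3 * m).+1) : x != comb_root -> 0 < x.
    by rewrite lt0n; apply: contra => /eqP x0; apply/eqP/val_inj.
  move: (pos _ u_nr) (pos _ v_nr) (ltn_ord u) (ltn_ord v) => ? ? ? ?.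
  by repeat case: ifP => ?; move=> ? /(congr1 (@nat_of_ord _)) /= ?; apply: ord_inj; lia.
Qed.

Definition tooth (j : nat) : 'I_(3 * m).+1 := inord (2 * m + j).

(* The word read upward from the tooth j, of length 1 + j + i. *)
Definition comb_word (j i : nat) : seq 'I_3 := cC :: nseq j cB ++ nseq i cA.

Lemma val_tooth j : j <= m -> nat_of_ord (tooth j) = 2 * m + j.
Proof. by move=> le_jm; rewrite /= inordK //; lia. Qed.

(* The upward path from a tooth jumps to the spine, then follows it to the root. *)
Lemma iter_tooth j t : 1 <= j <= m -> 1 <= t <= m + j ->
  iter t comb_parn (2 * m + j) = m + j + 1 - t.
Proof.
move=> le_j; elim: t => [//|t IH] le_t; rewrite iterS.
case: t IH le_t => [|t] IH le_t; last (rewrite IH; last lia).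
all: by rewrite /comb_parn /=; case: ifP; lia.
Qed.

Lemma comb_lab_A x : nat_of_ord x <= m -> comb_lab x = cA.
Proof. by rewrite /comb_lab => ->. Qed.

Lemma comb_lab_B x : m < nat_of_ord x <= 2 * m -> comb_lab x = cB.
Proof. by rewrite /comb_lab => /andP [lt_x ->]; rewrite leqNgt lt_x. Qed.

Lemma comb_lab_C x : 2 * m < nat_of_ord x -> comb_lab x = cC.
Proof. by move=> lt_x; rewrite /comb_lab; case: ifP => ?; [lia | case: ifP => ? //; lia]. Qed.

(* The i-th ancestor of the tooth 2m + j has height m + j + 1 - i, so the
   first 1 + j + i letters read up from it are C B^j A^i. *)
Lemma tooth_str j i : 1 <= j <= m -> i <= m ->
  up_ok comb_root comb_par (tooth j) (1 + j + i) /\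
  comb_word j i = str_b comb_par comb_lab (tooth j) (1 + j + i).
Proof.
move=> le_j le_i; have val_j := val_tooth (proj2 (andP le_j)).
have val_iter t : 1 <= t <= m + j -> nat_of_ord (iter t comb_par (tooth j)) = m + j + 1 - t.
  by move=> le_t; rewrite val_comb_iter val_j iter_tooth.
split.
  case=> [|t] lt_t; apply/eqP => /(congr1 (@nat_of_ord _)); first by rewrite val_j /=; lia.
  by rewrite val_iter /=; lia.
rewrite /str_b !iotaD !map_cat /= comb_lab_C ?val_j; last lia.
congr (_ :: _ ++ _); symmetry; apply: map_const_iota => t; rewrite mem_iota => lt_t.
  by apply: comb_lab_B; rewrite val_iter; lia.
by apply: comb_lab_A; rewrite val_iter; lia.
Qed.

Lemma tooth_leaf j : 1 <= j <= m -> is_leaf comb_root comb_par (tooth j).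
Proof.
move=> le_j c _; apply/eqP => /(congr1 (@nat_of_ord _)); rewrite val_comb_par val_tooth; last lia.
by rewrite /comb_parn; have := ltn_ord c; case: ifP; lia.
Qed.

(* The words C B^j A^i are read upward from leaves, hence left-maximal. *)
Lemma comb_word_LM j i : 1 <= j <= m -> i <= m ->
  left_maximal comb_root comb_par comb_lab (comb_word j i).
Proof.
move=> le_j le_i; have [ok eq_w] := tooth_str le_j le_i.
split; first by exists (tooth j), (1 + j + i).
by right; exists (tooth j), (1 + j + i); split => //; apply: tooth_leaf.
Qed.

End Comb.

(* C B^j A^i determines j (its number of B's) and i (its length). *)
Lemma comb_word_inj j i j' i' : comb_word j i = comb_word j' i' -> j = j' /\ i = i'.
Proof.
move=> eq_w; have := congr1 (count (pred1 cB)) eq_w; have := congr1 size eq_w.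
by rewrite /= !size_cat !count_cat !size_nseq !count_nseq /=; lia.
Qed.

Definition comb_words (m : nat) : seq (seq 'I_3) :=
  [seq comb_word j i | j <- iota 1 m, i <- iota 0 m].

(* The comb with m = N + 1 has 3m + 1 > N nodes and m^2 DAWG nodes and edges. *)
Lemma comb_lower N : exists (T : finType) (r : T) (par : T -> T) (lab : T -> 'I_3),
  [/\ is_trie r par lab, N <= #|T|,
      (exists s, dawg_node_list r par lab s /\ #|T| ^ 2 <= 16 * size s) &
      (exists s, dawg_edge_list r par lab s /\ #|T| ^ 2 <= 16 * size s)].
Proof.
pose m := N.+1.
exists 'I_(3 * m).+1, (comb_root m), (@comb_par m), (@comb_lab m); rewrite card_ord.
have size_words : (3 * m).+1 ^ 2 <= 16 * size (comb_words m).
  by rewrite size_allpairs !size_iota; nia.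
have words_uniq : uniq (comb_words m).
  by apply: allpairs_uniq => [||[j i] [j' i'] _ _ /comb_word_inj [-> ->]]; rewrite ?iota_uniq.
have words_LM Y : Y \in comb_words m ->
    left_maximal (comb_root m) (@comb_par m) (@comb_lab m) Y /\
    left_maximal (comb_root m) (@comb_par m) (@comb_lab m) (rcons Y cA).
  case/allpairsP => -[j i] []; rewrite !mem_iota /= => le_j le_i ->.
  have -> : rcons (comb_word j i) cA = comb_word j i.+1.
    by rewrite /comb_word -cats1 -(addn1 i) nseqD /= -catA.
  by split; apply: comb_word_LM; lia.
split; [exact: comb_trie | lia | exists (comb_words m) | exists [seq (Y, cA) | Y <- comb_words m]].
- by split => //; apply: LM_node_list => // Y /words_LM [].
- rewrite size_map; split => //; apply: LM_edge_list.
    by rewrite map_inj_uniq // => Y Y' [].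
  by move=> _ /mapP [Y /words_LM ? ->].
Qed.

Theorem theorem5 :
  (exists c : nat,
     forall (S T : finType) (r : T) (par : T -> T) (lab : T -> S),
       is_trie r par lab ->
       (forall s, dawg_node_list r par lab s -> size s <= c * #|T| ^ 2) /\
       (forall s, dawg_edge_list r par lab s -> size s <= c * #|T| ^ 2))
  /\
  (exists (S : finType) (d : nat), 0 < d /\
     forall N : nat, exists (T : finType) (r : T) (par : T -> T) (lab : T -> S),
       [/\ is_trie r par lab, N <= #|T|,
           (exists s, dawg_node_list r par lab s /\ #|T| ^ 2 <= d * size s) &
           (exists s, dawg_edge_list r par lab s /\ #|T| ^ 2 <= d * size s)]).
Proof.
split.
  exists 2 => S T r par lab trie.
  by split; [apply: dawg_nodes_upper | apply: dawg_edges_upper].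
by exists ('I_3 : finType), 16; split => //; exact: comb_lower.
Qed.
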